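(* Let $(M,d)$ be a pointed metric space and let $\mu\in ba(\widetilde M)$ be positive. The following are equivalent: (i) $\|\Phi^*\mu\|=\|\mu\|$. (ii) For every $\gamma\in(0,1)$ there exist $A\subseteq\widetilde M$ and $f\in B_{\mathrm{Lip}_0(M)}$ with $\mu(A)\ge\gamma\mu(\widetilde M)$ and $f(m_{x,y})\ge\gamma$ for all $(x,y)\in A$. (iii) For every $\gamma\in(0,1)$ there exists a $\gamma$-cyclically monotonic $A\subseteq\widetilde M$ with $\mu(A)\ge\gamma\mu(\widetilde M)$.
   Context: $(M,d)$ is a metric space with base point $0$; $\mathrm{Lip}_0(M)$ is the real Banach space of Lipschitz $f\colon M\to\mathbb R$ with $f(0)=0$, normed by the best Lipschitz constant, with closed unit ball $B_{\mathrm{Lip}_0(M)}$. $\widetilde M=\{(x,y)\in M\times M:x\ne y\}$ and $f(m_{x,y})=(f(x)-f(y))/d(x,y)$. $ba(\widetilde M)$ is the Banach space of bounded finitely additive signed measures on the power set of $\widetilde M$ with norm $|\mu|(\widetilde M)$. $\Phi\colon\mathrm{Lip}_0(M)\to\ell_\infty(\widetilde M)$, $\Phi f(x,y)=(f(x)-f(y))/d(x,y)$, and $(\Phi^*\mu)(f)=\int_{\widetilde M}\Phi f\,d\mu$. For $\gamma\in(0,1]$, $A\subseteq\widetilde M$ is $\gamma$-cyclically monotonic if for every finite sequence $(x_1,y_1),\dots,(x_n,y_n)\in A$, with $y_{n+1}=y_1$, $\sum_{i=1}^n\min\{d(x_i,y_{i+1})-\gamma d(x_i,y_i),\,d(y_i,y_{i+1})\}\ge0$.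 *)

From Stdlib Require Import Reals List.
From Coquelicot Require Import Coquelicot.
Open Scope R_scope.

Definition is_metric {M : Type} (d : M -> M -> R) : Prop :=
  (forall x y, 0 <= d x y) /\
  (forall x y, d x y = 0 <-> x = y) /\
  (forall x y, d x y = d y x) /\
  (forall x y z, d x z <= d x y + d y z).

Definition Mtilde (M : Type) : Type := { p : M * M | fst p <> snd p }.
Definition mt_x {M} (p : Mtilde M) : M := fst (proj1_sig p).
Definition mt_y {M} (p : Mtilde M) : M := snd (proj1_sig p).

(* f(m_{x,y}) = (f x - f y)/d(x,y), i.e. (Phi f)(x,y) *)
Definition Phi {M : Type} (d : M -> M -> R) (f : M -> R) (p : Mtilde M) : R :=
  (f (mt_x p) - f (mt_y p)) / d (mt_x p) (mt_y p).

Definition in_Lip0_ball {M : Type} (d : M -> M -> R) (x0 : M) (f : M -> R) : Prop :=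
  f x0 = 0 /\ forall x y, Rabs (f x - f y) <= d x y.

(* positive element of ba(\widetilde M): nonnegative finitely additive set
   function on the power set of \widetilde M (boundedness then follows). *)
Definition positive_ba {T : Type} (mu : (T -> Prop) -> R) : Prop :=
  (forall A, 0 <= mu A) /\
  (forall A B, (forall t, A t -> B t -> False) ->
      mu (fun t => A t \/ B t) = mu A + mu B).

Definition setT_ {T : Type} : T -> Prop := fun _ => True.

(* finite partitions of T with a constant on each block: a simple function
   below g; the lower sum is sum_i c_i mu(A_i) *)
Definition is_partition {T : Type} (P : list (T -> Prop)) : Prop :=
  (forall t, exists A, In A P /\ A t) /\
  (forall i j t, (i < length P)%nat -> (j < length P)%nat -> i <> j ->
      nth i P (fun _ => False) t -> nth j P (fun _ => False) t -> False).

Definition lower_sums {T : Type} (mu : (T -> Prop) -> R) (g : T -> R) : R -> Prop :=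
  fun r => exists (P : list ((T -> Prop) * R)),
    is_partition (map fst P) /\
    (forall A c t, In (A, c) P -> A t -> c <= g t) /\
    r = fold_right Rplus 0 (map (fun Ac => snd Ac * mu (fst Ac)) P).

(* integral of a bounded function against a positive finitely additive measure
   on the power set (every set measurable): supremum of lower simple sums *)
Definition ba_integral {T : Type} (mu : (T -> Prop) -> R) (g : T -> R) : R :=
  real (Lub_Rbar (lower_sums mu g)).

Definition Phi_star_norm {M : Type} (d : M -> M -> R) (x0 : M)
  (mu : (Mtilde M -> Prop) -> R) : Rbar :=
  Lub_Rbar (fun r => exists f, in_Lip0_ball d x0 f /\ r = Rabs (ba_integral mu (Phi d f))).

Definition cyc_sum {M : Type} (d : M -> M -> R) (gamma : R) (l : list (Mtilde M)) : R :=
  match l with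
  | nil => 0
  | p0 :: _ =>
    let n := length l in
    fold_right Rplus 0 (map (fun i =>
      let xi := mt_x (nth i l p0) in
      let yi := mt_y (nth i l p0) in
      let yj := mt_y (nth (S i mod n) l p0) in
      Rmin (d xi yj - gamma * d xi yi) (d yi yj)) (seq 0 n))
  end.

Definition cyclically_monotonic {M : Type} (d : M -> M -> R) (gamma : R)
  (A : Mtilde M -> Prop) : Prop :=
  forall l : list (Mtilde M), (forall p, In p l -> A p) -> 0 <= cyc_sum d gamma l.

From Stdlib Require Import Reals List.
From Coquelicot Require Import Coquelicot.
From Stdlib Require Import FunctionalExtensionality PropExtensionality Classical Lra Lia.
Open Scope R_scope.

(* Since |Phi f| <= 1, the integral of Phi f is at most mu(M~), and it comes close to
   mu(M~) exactly when Phi f is close to 1 (or, for -f, to -1) on a set of almost full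
   measure: this is (i) <-> (ii).  If Phi f >= gamma on A, the cyclic sums over A
   dominate the telescoping sums of f(y_i) - f(y_(i+1)), so A is gamma-cyclically
   monotonic.  Conversely, as in Rockafellar's theorem, a gamma-cyclically monotonic A
   carries the potential F(z) = sup over chains p0, ..., pn in A of the negated chain
   cost ending at z; F is 1-Lipschitz and F(x) - F(y) >= gamma d(x,y) on A. *)

Section BoundedSup.

Variables (E : R -> Prop) (r0 B : R).
Hypotheses (HE : E r0) (HB : forall r, E r -> r <= B).

Lemma Lub_Rbar_bounded_finite : Lub_Rbar E = Finite (real (Lub_Rbar E)).
Proof.
  destruct (Lub_Rbar_correct E) as [Hub Hlub].
  assert (H1 : Rbar_le r0 (Lub_Rbar E)) by (apply Hub; exact HE).
  assert (H2 : Rbar_le (Lub_Rbar E) B) by (apply Hlub; exact HB).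
  destruct (Lub_Rbar E); easy.
Qed.

Lemma Lub_Rbar_bounded_ub r : E r -> r <= real (Lub_Rbar E).
Proof.
  intros Hr. pose proof (proj1 (Lub_Rbar_correct E) r Hr) as H.
  rewrite Lub_Rbar_bounded_finite in H. exact H.
Qed.

Lemma Lub_Rbar_bounded_least b : (forall r, E r -> r <= b) -> real (Lub_Rbar E) <= b.
Proof.
  intros Hb. pose proof (proj2 (Lub_Rbar_correct E) b Hb) as H.
  rewrite Lub_Rbar_bounded_finite in H. exact H.
Qed.

End BoundedSup.

Definition disjoint_sets {T : Type} (A B : T -> Prop) : Prop := forall t, A t -> B t -> False.

Section FinitelyAdditive.

Context {T : Type} (mu : (T -> Prop) -> R).
Hypothesis Hmu : positive_ba mu.

Lemma mu_ext (A B : T -> Prop) : (forall t, A t <-> B t) -> mu A = mu B.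
Proof.
  intros H. f_equal. apply functional_extensionality. intros t.
  apply propositional_extensionality. apply H.
Qed.

Lemma mu_ge0 A : 0 <= mu A.
Proof. apply Hmu. Qed.

Lemma mu_union A B : disjoint_sets A B -> mu (fun t => A t \/ B t) = mu A + mu B.
Proof. apply Hmu. Qed.

Lemma mu_empty (A : T -> Prop) : (forall t, ~ A t) -> mu A = 0.
Proof.
  intros HA.
  assert (H := mu_union A A (fun t a _ => HA t a)).
  rewrite (mu_ext (fun t => A t \/ A t) A) in H by tauto. lra.
Qed.

Lemma mu_split (B S : T -> Prop) :
  mu B = mu (fun t => B t /\ S t) + mu (fun t => B t /\ ~ S t).
Proof.
  rewrite <- mu_union by (intros t; tauto).
  apply mu_ext. intros t. destruct (classic (S t)); tauto.
Qed.

Lemma mu_compl (S : T -> Prop) : mu S + mu (fun t => ~ S t) = mu setT_.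
Proof.
  rewrite (mu_split setT_ S). f_equal; apply mu_ext; unfold setT_; tauto.
Qed.

Lemma mu_compl_setT : mu (fun t => ~ setT_ t) = 0.
Proof. apply mu_empty. unfold setT_. tauto. Qed.

Lemma Rmult_mu_le (g : T -> R) (B : T -> Prop) (c a : R) :
  (forall t, B t -> c <= g t) -> (forall t, B t -> g t <= a) -> c * mu B <= a * mu B.
Proof.
  intros Hc Ha. destruct (classic (exists t, B t)) as [[t Bt]|HB].
  - apply Rmult_le_compat_r; [apply mu_ge0|].
    apply (Rle_trans _ (g t)); auto.
  - rewrite mu_empty by firstorder. lra.
Qed.

Definition blocks_union (Q : list (T -> Prop)) (t : T) : Prop := List.Exists (fun A => A t) Q.

Lemma mu_inter_blocks_union_cons (X B : T -> Prop) Q :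
  List.Forall (disjoint_sets B) Q ->
  mu (fun t => X t /\ blocks_union (B :: Q) t) =
  mu (fun t => B t /\ X t) + mu (fun t => X t /\ blocks_union Q t).
Proof.
  intros HQ. rewrite <- mu_union.
  - apply mu_ext. intros t. unfold blocks_union. rewrite Exists_cons. tauto.
  - intros t [Bt _] [_ HU]. unfold blocks_union in HU.
    rewrite Exists_exists in HU. destruct HU as [C [HC Ct]].
    rewrite Forall_forall in HQ. exact (HQ C HC t Bt Ct).
Qed.

End FinitelyAdditive.

Section LowerSums.

Context {T : Type} (mu : (T -> Prop) -> R) (g : T -> R).
Hypothesis Hmu : positive_ba mu.

Lemma partition_pairwise_disjoint (Q : list (T -> Prop)) :
  is_partition Q -> ForallOrdPairs disjoint_sets Q.
Proof.
  intros [_ Hdisj]. induction Q as [|B Q IH]; constructor.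
  - apply Forall_forall. intros C HC t Bt Ct.
    destruct (In_nth Q C (fun _ => False) HC) as [j [Hj HCj]].
    apply (Hdisj 0%nat (S j) t); simpl; try lia; [exact Bt | now rewrite HCj].
  - apply IH. intros i j t Hi Hj Hij.
    apply (Hdisj (S i) (S j) t); simpl; lia.
Qed.

Lemma block_sum_le (S : T -> Prop) (a b : R) (P : list ((T -> Prop) * R)) :
  (forall t, S t -> g t <= a) -> (forall t, ~ S t -> g t <= b) ->
  ForallOrdPairs disjoint_sets (map fst P) ->
  (forall A c t, In (A, c) P -> A t -> c <= g t) ->
  fold_right Rplus 0 (map (fun Ac => snd Ac * mu (fst Ac)) P) <=
  a * mu (fun t => S t /\ blocks_union (map fst P) t) +
  b * mu (fun t => ~ S t /\ blocks_union (map fst P) t).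
Proof.
  intros Ha Hb. induction P as [|[B c] P IH]; intros Hdisj Hc; simpl.
  - rewrite !(mu_empty mu Hmu) by (intros t [_ H]; inversion H). lra.
  - inversion_clear Hdisj as [|? ? HB HP].
    rewrite !(mu_inter_blocks_union_cons mu Hmu) by exact HB.
    rewrite (mu_split mu Hmu B S).
    assert (HcB : forall t, B t -> c <= g t) by (intros t; apply (Hc B c t); now left).
    assert (KS := Rmult_mu_le mu Hmu g (fun t => B t /\ S t) c a
                    (fun t H => HcB t (proj1 H)) (fun t H => Ha t (proj2 H))).
    assert (KN := Rmult_mu_le mu Hmu g (fun t => B t /\ ~ S t) c b
                    (fun t H => HcB t (proj1 H)) (fun t H => Hb t (proj2 H))).
    assert (KP := IH HP (fun A c' t H => Hc A c' t (or_intror H))).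
    simpl in KS, KN. lra.
Qed.

Lemma lower_sums_le (S : T -> Prop) (a b r : R) :
  (forall t, S t -> g t <= a) -> (forall t, ~ S t -> g t <= b) ->
  lower_sums mu g r -> r <= a * mu S + b * mu (fun t => ~ S t).
Proof.
  intros Ha Hb [P [[Hcov Hdisj] [Hc ->]]].
  assert (HU : forall t, blocks_union (map fst P) t).
  { intros t. apply Exists_exists. apply Hcov. }
  rewrite (mu_ext mu S (fun t => S t /\ blocks_union (map fst P) t)) by firstorder.
  rewrite (mu_ext mu (fun t => ~ S t) (fun t => ~ S t /\ blocks_union (map fst P) t))
    by firstorder.
  apply block_sum_le; auto. now apply partition_pairwise_disjoint.
Qed.

Lemma lower_sums_two_level (S : T -> Prop) (a b : R) :
  (forall t, S t -> a <= g t) -> (forall t, ~ S t -> b <= g t) ->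
  lower_sums mu g (a * mu S + b * mu (fun t => ~ S t)).
Proof.
  intros Ha Hb. exists ((S, a) :: ((fun t => ~ S t), b) :: nil). split; [split|split].
  - intros t. destruct (classic (S t)).
    + exists S. simpl. auto.
    + exists (fun t => ~ S t). simpl. auto.
  - intros i j t Hi Hj Hij. simpl in Hi, Hj.
    destruct i as [|[|i]]; destruct j as [|[|j]]; simpl; try lia; tauto.
  - intros A c t [H|[H|[]]]; injection H as <- <-; auto.
  - simpl. ring.
Qed.

Variable c : R.
Hypothesis Hg : forall t, Rabs (g t) <= c.

Let setT_bounds t : setT_ t -> - c <= g t <= c.
Proof. intros _. apply Rabs_le_between, Hg. Qed.

Lemma lower_sums_le_mass r : lower_sums mu g r -> r <= c * mu setT_.
Proof.
  intros Hr.
  assert (K := lower_sums_le setT_ c 0 r (fun t H => proj2 (setT_bounds t H))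
                 (fun t H => False_ind _ (H I)) Hr).
  lra.
Qed.

Lemma lower_sums_mass : lower_sums mu g (- c * mu setT_ + 0 * mu (fun t => ~ setT_ t)).
Proof.
  apply lower_sums_two_level.
  - intros t H. apply setT_bounds, H.
  - intros t H. destruct (H I).
Qed.

Lemma ba_integral_le (S : T -> Prop) (a b : R) :
  (forall t, S t -> g t <= a) -> (forall t, ~ S t -> g t <= b) ->
  ba_integral mu g <= a * mu S + b * mu (fun t => ~ S t).
Proof.
  intros Ha Hb. apply (Lub_Rbar_bounded_least _ _ _ lower_sums_mass lower_sums_le_mass).
  intros r. now apply lower_sums_le.
Qed.

Lemma ba_integral_ge (S : T -> Prop) (a b : R) :
  (forall t, S t -> a <= g t) -> (forall t, ~ S t -> b <= g t) ->
  a * mu S + b * mu (fun t => ~ S t) <= ba_integral mu g.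
Proof.
  intros Ha Hb. apply (Lub_Rbar_bounded_ub _ _ _ lower_sums_mass lower_sums_le_mass).
  now apply lower_sums_two_level.
Qed.

Lemma ba_integral_abs_le : Rabs (ba_integral mu g) <= c * mu setT_.
Proof.
  apply Rabs_le_between.
  split.
  - assert (K := ba_integral_ge setT_ (- c) 0 (fun t H => proj1 (setT_bounds t H))
                   (fun t H => False_ind _ (H I))).
    rewrite (mu_compl_setT mu Hmu) in K. lra.
  - assert (K := ba_integral_le setT_ c 0 (fun t H => proj2 (setT_bounds t H))
                   (fun t H => False_ind _ (H I))).
    rewrite (mu_compl_setT mu Hmu) in K. lra.
Qed.

End LowerSums.

Lemma ba_integral_level_sets {T : Type} (mu : (T -> Prop) -> R) (g : T -> R) (gamma : R) :
  positive_ba mu -> (forall t, Rabs (g t) <= 1) -> gamma < 1 ->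
  (1 - (1 - gamma) ^ 2) * mu setT_ < Rabs (ba_integral mu g) ->
  gamma * mu setT_ <= mu (fun t => g t >= gamma) \/
  gamma * mu setT_ <= mu (fun t => g t <= - gamma).
Proof.
  intros Hmu Hg Hgamma Hlarge.
  assert (Hbnd : forall t, - 1 <= g t <= 1) by (intros t; apply Rabs_le_between, Hg).
  destruct (Rle_or_lt 0 (ba_integral mu g)) as [Hpos|Hneg].
  - left. rewrite Rabs_pos_eq in Hlarge by exact Hpos.
    assert (K := ba_integral_le mu g Hmu 1 Hg (fun t => g t >= gamma) 1 gamma
                   (fun t _ => proj2 (Hbnd t)) (fun t H => Rlt_le _ _ (Rnot_ge_lt _ _ H))).
    assert (C := mu_compl mu Hmu (fun t => g t >= gamma)).
    nra.
  - right. rewrite Rabs_left in Hlarge by exact Hneg.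
    assert (K := ba_integral_ge mu g Hmu 1 Hg (fun t => g t <= - gamma) (-1) (- gamma)
                   (fun t _ => proj1 (Hbnd t)) (fun t H => Rlt_le _ _ (Rnot_le_lt _ _ H))).
    assert (C := mu_compl mu Hmu (fun t => g t <= - gamma)).
    nra.
Qed.

Section LipschitzQuotients.

Context {M : Type} (d : M -> M -> R).
Hypothesis Hd : is_metric d.

Lemma dist_Mtilde_pos (p : Mtilde M) : 0 < d (mt_x p) (mt_y p).
Proof.
  destruct Hd as [Hpos [Hsep _]]. destruct p as [[x y] Hxy]. unfold mt_x, mt_y. simpl in *.
  destruct (Rle_lt_or_eq_dec _ _ (Hpos x y)) as [H|H]; [exact H|].
  destruct Hxy. apply Hsep. now symmetry.
Qed.

Lemma Phi_ge_iff (f : M -> R) (p : Mtilde M) (gamma : R) :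
  Phi d f p >= gamma <-> f (mt_x p) - f (mt_y p) >= gamma * d (mt_x p) (mt_y p).
Proof.
  pose proof (dist_Mtilde_pos p) as Hp. unfold Phi.
  split; intros H; apply Rle_ge; apply Rge_le in H.
  - now apply Rle_div_r.
  - now apply Rle_div_r.
Qed.

Lemma Phi_abs_le (x0 : M) (f : M -> R) (p : Mtilde M) :
  in_Lip0_ball d x0 f -> Rabs (Phi d f p) <= 1.
Proof.
  intros [_ Hf]. pose proof (dist_Mtilde_pos p) as Hp. unfold Phi.
  rewrite Rabs_div, (Rabs_pos_eq (d _ _)) by lra.
  apply Rle_div_l; [lra|]. rewrite Rmult_1_l. apply Hf.
Qed.

Lemma in_Lip0_ball_zero (x0 : M) : in_Lip0_ball d x0 (fun _ => 0).
Proof.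
  split; [reflexivity|]. intros x y.
  rewrite Rminus_eq_0, Rabs_R0. apply Hd.
Qed.

End LipschitzQuotients.

Lemma Phi_opp {M : Type} (d : M -> M -> R) (f : M -> R) (p : Mtilde M) :
  Phi d (fun x => - f x) p = - Phi d f p.
Proof. unfold Phi, Rdiv. ring. Qed.

Lemma in_Lip0_ball_opp {M : Type} (d : M -> M -> R) (x0 : M) (f : M -> R) :
  in_Lip0_ball d x0 f -> in_Lip0_ball d x0 (fun x => - f x).
Proof.
  intros [H0 Hf]. split; [now rewrite H0, Ropp_0|].
  intros x y. rewrite <- Rabs_Ropp. replace (- (- f x - - f y)) with (f x - f y) by ring.
  apply Hf.
Qed.

Section NormingFunctions.

Context {M : Type} (d : M -> M -> R) (x0 : M) (mu : (Mtilde M -> Prop) -> R).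
Hypotheses (Hd : is_metric d) (Hmu : positive_ba mu).

Definition Phi_star_values (r : R) : Prop :=
  exists f, in_Lip0_ball d x0 f /\ r = Rabs (ba_integral mu (Phi d f)).

Lemma Phi_star_values_le_mass r : Phi_star_values r -> r <= mu setT_.
Proof.
  intros [f [Hf ->]]. rewrite <- (Rmult_1_l (mu setT_)).
  apply (ba_integral_abs_le mu _ Hmu). intros p. now apply (Phi_abs_le d Hd x0).
Qed.

Lemma Phi_star_values_zero : Phi_star_values (Rabs (ba_integral mu (Phi d (fun _ => 0)))).
Proof. exists (fun _ => 0). split; [now apply in_Lip0_ball_zero | reflexivity]. Qed.

Lemma Phi_star_norm_eq_mass_iff :
  Phi_star_norm d x0 mu = Finite (mu setT_) <->
  forall eps, 0 < eps ->
    exists f, in_Lip0_ball d x0 f /\ mu setT_ - eps < Rabs (ba_integral mu (Phi d f)).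
Proof.
  pose proof (Lub_Rbar_bounded_finite _ _ _ Phi_star_values_zero Phi_star_values_le_mass) as Hfin.
  pose proof (Lub_Rbar_bounded_ub _ _ _ Phi_star_values_zero Phi_star_values_le_mass) as Hub.
  pose proof (Lub_Rbar_bounded_least _ _ _ Phi_star_values_zero Phi_star_values_le_mass)
    as Hleast.
  unfold Phi_star_norm. fold Phi_star_values. rewrite Hfin.
  split.
  - intros Hnorm eps Heps. injection Hnorm as Hnorm.
    apply NNPP. intros Hno.
    assert (K : real (Lub_Rbar Phi_star_values) <= mu setT_ - eps).
    { apply Hleast. intros r [f [Hf ->]]. apply Rnot_lt_le. intros Hlt.
      apply Hno. exists f. now split. }
    lra.
  - intros Happrox. f_equal. apply Rle_antisym.
    + now apply Hleast, Phi_star_values_le_mass.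
    + apply Rle_plus_epsilon. intros eps Heps.
      destruct (Happrox eps Heps) as [f [Hf Hlt]].
      assert (K : Rabs (ba_integral mu (Phi d f)) <= real (Lub_Rbar Phi_star_values))
        by (apply Hub; now exists f).
      lra.
Qed.

Lemma level_sets_of_norming :
  (forall eps, 0 < eps ->
    exists f, in_Lip0_ball d x0 f /\ mu setT_ - eps < Rabs (ba_integral mu (Phi d f))) ->
  forall gamma, 0 < gamma < 1 ->
    exists (A : Mtilde M -> Prop) (f : M -> R),
      in_Lip0_ball d x0 f /\ mu A >= gamma * mu setT_ /\ (forall p, A p -> Phi d f p >= gamma).
Proof.
  intros Happrox gamma Hgamma.
  destruct (Rle_lt_or_eq_dec _ _ (mu_ge0 mu Hmu setT_)) as [Hm|Hm].
  2:{ exists (fun _ => False), (fun _ => 0). split; [now apply in_Lip0_ball_zero|].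
      split; [|tauto]. rewrite (mu_empty mu Hmu) by tauto. rewrite <- Hm. lra. }
  destruct (Happrox ((1 - gamma) ^ 2 * mu setT_)) as [f [Hf Hlarge]].
  { apply Rmult_lt_0_compat; [apply pow_lt|]; lra. }
  destruct (ba_integral_level_sets mu (Phi d f) gamma Hmu) as [Hup|Hdown].
  - intros p. now apply (Phi_abs_le d Hd x0).
  - lra.
  - lra.
  - exists (fun p => Phi d f p >= gamma), f. auto using Rle_ge.
  - exists (fun p => Phi d f p <= - gamma), (fun x => - f x).
    split; [now apply in_Lip0_ball_opp|]. split; [now apply Rle_ge|].
    intros p Hp. rewrite Phi_opp. lra.
Qed.

Lemma norming_of_level_sets :
  (forall gamma, 0 < gamma < 1 ->
    exists (A : Mtilde M -> Prop) (f : M -> R),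
      in_Lip0_ball d x0 f /\ mu A >= gamma * mu setT_ /\ (forall p, A p -> Phi d f p >= gamma)) ->
  forall eps, 0 < eps ->
    exists f, in_Lip0_ball d x0 f /\ mu setT_ - eps < Rabs (ba_integral mu (Phi d f)).
Proof.
  intros Hlevel eps Heps.
  set (m := mu setT_).
  assert (Hm : 0 <= m) by apply (mu_ge0 mu Hmu).
  (* with [1 - gamma = eps / (3 (m + eps))], the loss [(1 - gamma) (2 + gamma) m] is below [eps] *)
  set (delta := eps / (3 * (m + eps))).
  assert (Hdelta : 0 < delta <= 1 / 3).
  { unfold delta. split; [apply Rdiv_lt_0_compat; lra|].
    apply Rle_div_l; lra. }
  assert (Hloss : 3 * delta * m < eps).
  { unfold delta. apply (Rmult_lt_reg_r (m + eps)); [lra|].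
    field_simplify; [nra | lra]. }
  destruct (Hlevel (1 - delta)) as [A [f [Hf [HA HAf]]]]; [lra|].
  exists f. split; [exact Hf|].
  assert (K := ba_integral_ge mu (Phi d f) Hmu 1 (fun p => Phi_abs_le d Hd x0 f p Hf)
                 A (1 - delta) (-1) (fun p Hp => Rge_le _ _ (HAf p Hp))
                 (fun p _ => proj1 (proj1 (Rabs_le_between _ _) (Phi_abs_le d Hd x0 f p Hf)))).
  assert (C := mu_compl mu Hmu A). fold m in C, HA, K.
  assert (Habs := Rle_abs (ba_integral mu (Phi d f))).
  nra.
Qed.

End NormingFunctions.

Definition cyc_cost {M : Type} (d : M -> M -> R) (gamma : R) (p : Mtilde M) (z : M) : R :=
  Rmin (d (mt_x p) z - gamma * d (mt_x p) (mt_y p)) (d (mt_y p) z).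

Fixpoint path_cost {M : Type} (d : M -> M -> R) (gamma : R) (p : Mtilde M)
    (r : list (Mtilde M)) : R :=
  match r with
  | nil => 0
  | q :: r' => cyc_cost d gamma p (mt_y q) + path_cost d gamma q r'
  end.

Lemma sum_list_app (l1 l2 : list R) :
  fold_right Rplus 0 (l1 ++ l2) = fold_right Rplus 0 l1 + fold_right Rplus 0 l2.
Proof. induction l1 as [|a l1 IH]; simpl; lra. Qed.

Lemma last_cons {A : Type} (q p : A) (r : list A) : last (q :: r) p = last r q.
Proof.
  revert q p. induction r as [|a r IH]; intros q p; [reflexivity|].
  change (last (a :: r) p = last (a :: r) q). now rewrite !IH.
Qed.

Lemma nth_length_last {A : Type} (dflt : A) (r : list A) (p : A) :
  nth (length r) (p :: r) dflt = last r p.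
Proof.
  revert p. induction r as [|q r IH]; intros p; [reflexivity|].
  change (nth (length r) (q :: r) dflt = last (q :: r) p). now rewrite IH, last_cons.
Qed.

Lemma In_last_cons {A : Type} (r : list A) (p : A) : In (last r p) (p :: r).
Proof.
  revert p. induction r as [|q r IH]; intros p; [now left|].
  rewrite last_cons. right. apply IH.
Qed.

Section PathCost.

Context {M : Type} (d : M -> M -> R) (gamma : R).

Lemma path_cost_nth (dflt : Mtilde M) (r : list (Mtilde M)) (p : Mtilde M) :
  fold_right Rplus 0 (map (fun i =>
      cyc_cost d gamma (nth i (p :: r) dflt) (mt_y (nth (S i) (p :: r) dflt)))
    (seq 0 (length r))) = path_cost d gamma p r.
Proof.
  revert p. induction r as [|q r IH]; intros p; [reflexivity|].
  simpl length. simpl. rewrite <- seq_shift, map_map. f_equal. apply IH.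
Qed.

Lemma cyc_sum_cons (p0 : Mtilde M) (r : list (Mtilde M)) :
  cyc_sum d gamma (p0 :: r) = path_cost d gamma p0 r + cyc_cost d gamma (last r p0) (mt_y p0).
Proof.
  unfold cyc_sum. fold (cyc_cost d gamma).
  cbn [length]. rewrite seq_S, map_app, sum_list_app. cbn [map fold_right Nat.add].
  rewrite Nat.Div0.mod_same, nth_length_last, <- (path_cost_nth p0 r p0), Rplus_0_r.
  f_equal. f_equal. apply map_ext_in. intros i Hi. apply in_seq in Hi.
  now rewrite Nat.mod_small by lia.
Qed.

Lemma path_cost_snoc (p q : Mtilde M) (r : list (Mtilde M)) :
  path_cost d gamma p (r ++ q :: nil) = path_cost d gamma p r + cyc_cost d gamma (last r p) (mt_y q).
Proof.
  revert p. induction r as [|a r IH]; intros p; [simpl; ring|].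
  rewrite last_cons. cbn [app path_cost]. rewrite IH. ring.
Qed.

End PathCost.

Lemma Rmin_le_add (a b a' b' e : R) : a' <= a + e -> b' <= b + e -> Rmin a' b' <= Rmin a b + e.
Proof. intros Ha Hb. unfold Rmin. destruct (Rle_dec a' b'), (Rle_dec a b); lra. Qed.

Section CyclicMonotonicity.

Context {M : Type} (d : M -> M -> R) (gamma : R).
Hypothesis Hd : is_metric d.

Lemma cyc_cost_lipschitz (p : Mtilde M) (z w : M) :
  cyc_cost d gamma p w <= cyc_cost d gamma p z + d z w.
Proof.
  destruct Hd as [_ [_ [_ Htri]]]. unfold cyc_cost. apply Rmin_le_add.
  - pose proof (Htri (mt_x p) z w). lra.
  - apply Htri.
Qed.

Section LipschitzToCyclic.

Variables (x0 : M) (f : M -> R) (A : Mtilde M -> Prop).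
Hypotheses (Hf : in_Lip0_ball d x0 f) (HA : forall p, A p -> Phi d f p >= gamma).

Lemma cyc_cost_ge_increment (p : Mtilde M) (z : M) :
  A p -> f (mt_y p) - f z <= cyc_cost d gamma p z.
Proof.
  intros Hp. destruct Hf as [_ Hlip].
  pose proof (proj1 (Phi_ge_iff d Hd f p gamma) (HA p Hp)) as Hstep.
  pose proof (proj1 (Rabs_le_between _ _) (Hlip (mt_x p) z)).
  pose proof (proj1 (Rabs_le_between _ _) (Hlip (mt_y p) z)).
  unfold cyc_cost. apply Rmin_glb; lra.
Qed.

Lemma path_cost_ge_increment (p : Mtilde M) (r : list (Mtilde M)) :
  A p -> List.Forall A r -> f (mt_y p) - f (mt_y (last r p)) <= path_cost d gamma p r.
Proof.
  revert p. induction r as [|q r IH]; intros p Hp Hr; [simpl; lra|].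
  inversion_clear Hr as [|? ? Hq Hr'].
  rewrite last_cons. cbn [path_cost].
  pose proof (cyc_cost_ge_increment p (mt_y q) Hp). pose proof (IH q Hq Hr'). lra.
Qed.

Lemma cyclically_monotonic_of_Lip0_ball : cyclically_monotonic d gamma A.
Proof.
  intros [|p0 r] Hl; [simpl; lra|].
  assert (Hall : List.Forall A (p0 :: r)) by (apply Forall_forall; exact Hl).
  inversion_clear Hall as [|? ? Hp0 Hr].
  rewrite cyc_sum_cons.
  pose proof (path_cost_ge_increment p0 r Hp0 Hr).
  pose proof (cyc_cost_ge_increment (last r p0) (mt_y p0)
                (Hl _ (In_last_cons r p0))).
  lra.
Qed.

End LipschitzToCyclic.

Section CyclicToLipschitz.

Variables (A : Mtilde M -> Prop) (p0 : Mtilde M).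
Hypotheses (Hgamma : 0 <= gamma) (Hp0 : A p0) (HA : cyclically_monotonic d gamma A).

Definition chain_value (r : list (Mtilde M)) (z : M) : R :=
  - path_cost d gamma p0 r - cyc_cost d gamma (last r p0) z.

Definition chain_values (z : M) (v : R) : Prop :=
  exists r, List.Forall A r /\ v = chain_value r z.

Definition potential (z : M) : R := real (Lub_Rbar (chain_values z)).

Lemma chain_value_le_dist (r : list (Mtilde M)) (z : M) :
  List.Forall A r -> chain_value r z <= d z (mt_y p0).
Proof.
  intros Hr.
  assert (Hcyc : 0 <= cyc_sum d gamma (p0 :: r)).
  { apply HA. apply Forall_forall. now constructor. }
  rewrite cyc_sum_cons in Hcyc.
  pose proof (cyc_cost_lipschitz (last r p0) z (mt_y p0)).
  unfold chain_value. lra.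
Qed.

Lemma chain_values_nil (z : M) : chain_values z (chain_value nil z).
Proof. exists nil. now split. Qed.

Lemma chain_values_le (z : M) (v : R) : chain_values z v -> v <= d z (mt_y p0).
Proof. intros [r [Hr ->]]. now apply chain_value_le_dist. Qed.

Lemma potential_ge (r : list (Mtilde M)) (z : M) :
  List.Forall A r -> chain_value r z <= potential z.
Proof.
  intros Hr. apply (Lub_Rbar_bounded_ub _ _ _ (chain_values_nil z) (chain_values_le z)).
  now exists r.
Qed.

Lemma potential_least (z : M) (b : R) :
  (forall r, List.Forall A r -> chain_value r z <= b) -> potential z <= b.
Proof.
  intros Hb. apply (Lub_Rbar_bounded_least _ _ _ (chain_values_nil z) (chain_values_le z)).
  intros v [r [Hr ->]]. now apply Hb.
Qed.

Lemma potential_lipschitz (z w : M) : potential z <= potential w + d z w.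
Proof.
  apply potential_least. intros r Hr.
  pose proof (potential_ge r w Hr).
  pose proof (cyc_cost_lipschitz (last r p0) z w).
  unfold chain_value in *. lra.
Qed.

Lemma chain_value_snoc (r : list (Mtilde M)) (q : Mtilde M) :
  chain_value (r ++ q :: nil) (mt_x q) = chain_value r (mt_y q) + gamma * d (mt_x q) (mt_y q).
Proof.
  destruct Hd as [Hpos [Hsep _]].
  assert (Hq : cyc_cost d gamma q (mt_x q) = - (gamma * d (mt_x q) (mt_y q))).
  { unfold cyc_cost. rewrite (proj2 (Hsep _ _) eq_refl), Rmin_left; [ring|].
    pose proof (Hpos (mt_x q) (mt_y q)). pose proof (Hpos (mt_y q) (mt_x q)).
    pose proof (Rmult_le_pos _ _ Hgamma (Hpos (mt_x q) (mt_y q))). lra. }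
  unfold chain_value. rewrite path_cost_snoc, last_last, Hq. ring.
Qed.

Lemma potential_step (q : Mtilde M) :
  A q -> potential (mt_y q) + gamma * d (mt_x q) (mt_y q) <= potential (mt_x q).
Proof.
  intros Hq.
  enough (potential (mt_y q) <= potential (mt_x q) - gamma * d (mt_x q) (mt_y q)) by lra.
  apply potential_least. intros r Hr.
  assert (Hrq : List.Forall A (r ++ q :: nil)) by (apply Forall_app; auto).
  pose proof (potential_ge _ (mt_x q) Hrq). rewrite chain_value_snoc in *. lra.
Qed.

Lemma Lip0_ball_of_cyclically_monotonic_inhabited (x0 : M) :
  exists f, in_Lip0_ball d x0 f /\ forall p, A p -> Phi d f p >= gamma.
Proof.
  exists (fun z => potential z - potential x0). split; [split|].
  - ring.
  - intros x y. apply Rabs_le_between.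
    pose proof (potential_lipschitz x y). pose proof (potential_lipschitz y x).
    rewrite (proj1 (proj2 (proj2 Hd)) y x) in *. lra.
  - intros q Hq. apply (Phi_ge_iff d Hd). pose proof (potential_step q Hq). lra.
Qed.

End CyclicToLipschitz.

Lemma Lip0_ball_of_cyclically_monotonic (x0 : M) (A : Mtilde M -> Prop) :
  0 <= gamma -> cyclically_monotonic d gamma A ->
  exists f, in_Lip0_ball d x0 f /\ forall p, A p -> Phi d f p >= gamma.
Proof.
  intros Hgamma HA. destruct (classic (exists p0, A p0)) as [[p0 Hp0]|Hempty].
  - now apply (Lip0_ball_of_cyclically_monotonic_inhabited A p0).
  - exists (fun _ => 0). split; [now apply in_Lip0_ball_zero|].
    intros p Hp. destruct Hempty. now exists p.
Qed.

End CyclicMonotonicity.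

Theorem corollary2p6 (M : Type) (d : M -> M -> R) (x0 : M)
  (mu : (Mtilde M -> Prop) -> R) :
  is_metric d -> positive_ba mu ->
  ((Phi_star_norm d x0 mu = Finite (mu setT_)) <->
   (forall gamma, 0 < gamma < 1 ->
      exists (A : Mtilde M -> Prop) (f : M -> R),
        in_Lip0_ball d x0 f /\ mu A >= gamma * mu setT_ /\
        (forall p, A p -> Phi d f p >= gamma))) /\
  ((Phi_star_norm d x0 mu = Finite (mu setT_)) <->
   (forall gamma, 0 < gamma < 1 ->
      exists A : Mtilde M -> Prop,
        cyclically_monotonic d gamma A /\ mu A >= gamma * mu setT_)).
Proof.
  intros Hd Hmu.
  rewrite !(Phi_star_norm_eq_mass_iff d x0 mu Hd Hmu).
  split; split.
  - now apply level_sets_of_norming.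
  - now apply norming_of_level_sets.
  - intros Hnorming gamma Hgamma.
    destruct (level_sets_of_norming d x0 mu Hd Hmu Hnorming gamma Hgamma)
      as [A [f [Hf [Hmass HAf]]]].
    exists A. split; [|exact Hmass].
    exact (cyclically_monotonic_of_Lip0_ball d gamma Hd x0 f A Hf HAf).
  - intros Hcyclic. apply norming_of_level_sets; [exact Hd | exact Hmu|].
    intros gamma Hgamma. destruct (Hcyclic gamma Hgamma) as [A [HA Hmass]].
    destruct (Lip0_ball_of_cyclically_monotonic d gamma Hd x0 A) as [f [Hf HAf]];
      [lra | exact HA |].
    now exists A, f.
Qed.
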